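(* Let $(X_t)_{t\geq0}$ be a right-continuous stochastic process on a filtered probability space $(\Omega,\mathscr F,\mathbb P;(\mathscr F_t)_{t\geq0})$. Suppose that for some $Y\in L^1(\Omega)$ and $A>0$, for every $t\geq0$, $|X_t|\leq Y$ and $\mathbb E(X_t\,|\,\mathscr F_t)\leq A$ $\mathbb P$-a.s. Then for any finite stopping time $\tau$, $\mathbb E(X_\tau\,|\,\mathscr F_\tau)\leq A$ $\mathbb P$-a.s. *)

From HB Require Import structures.
From mathcomp Require Import all_boot all_order all_algebra.
From mathcomp Require Import all_classical all_reals all_analysis.
Set Implicit Arguments. Unset Strict Implicit. Unset Printing Implicit Defensive.
Import Order.TTheory GRing.Theory Num.Theory.
Import numFieldNormedType.Exports.
Local Open Scope classical_set_scope.
Local Open Scope ring_scope.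

Definition is_filtration d (T : measurableType d) (R : realType)
  (F : R -> set (set T)) : Prop :=
  (forall t, 0 <= t -> sigma_algebra setT (F t)) /\
  (forall t, 0 <= t -> F t `<=` measurable) /\
  (forall s t, 0 <= s -> s <= t -> F s `<=` F t).

Definition is_stopping_time (T : Type) (R : realType)
  (F : R -> set (set T)) (tau : T -> R) : Prop :=
  (forall w, 0 <= tau w) /\
  (forall t, 0 <= t -> F t [set w | tau w <= t]).

Definition stopped_sigma d (T : measurableType d) (R : realType)
  (F : R -> set (set T)) (tau : T -> R) : set (set T) :=
  [set A | measurable A /\
           forall t, 0 <= t -> F t (A `&` [set w | tau w <= t])].

Definition measurable_wrt (T : Type) (R : realType) (G : set (set T))
  (W : T -> R) : Prop :=
  forall B : set R, measurable B -> G (W @^-1` B).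

Definition cond_exp_version d (T : measurableType d) (R : realType)
  (P : probability T R) (G : set (set T)) (Z W : T -> R) : Prop :=
  measurable_wrt G W /\
  P.-integrable setT (fun w => (W w)%:E) /\
  (forall A, G A ->
     (\int[P]_(w in A) (W w)%:E = \int[P]_(w in A) (Z w)%:E)%E).

(* "E(Z | G) <= A  P-a.s." (as a statement about the conditional expectation,
   which is defined up to P-a.s. equality): every version is <= A a.s. *)
Definition cond_exp_le d (T : measurableType d) (R : realType)
  (P : probability T R) (G : set (set T)) (Z : T -> R) (A : R) : Prop :=
  forall W, cond_exp_version P G Z W -> {ae P, forall w, W w <= A}.

Definition stopped_process (T : Type) (R : Type) (X : R -> T -> R)
  (tau : T -> R) : T -> R := fun w => X (tau w) w.

From HB Require Import structures.
From mathcomp Require Import all_boot all_order all_algebra.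
From mathcomp Require Import all_classical all_reals all_analysis.
From mathcomp Require Import measurable_realfun.
Import Order.TTheory GRing.Theory Num.Theory.
Import numFieldNormedType.Exports.
Local Open Scope classical_set_scope.
Local Open Scope ring_scope.
Set Implicit Arguments. Unset Strict Implicit.

(* Discretize tau from above: tau_n = ceil((n+1) tau) / (n+1) takes values in
   the grid N/(n+1), and for B in F_tau the set B /\ {tau_n = k/(n+1)} lies in
   F_(k/(n+1)); summing the fixed-time bounds  int_C X_t <= A P(C), C in F_t,
   gives  int_B X_(tau_n) <= A P(B)  whenever tau is bounded on B.  Right
   continuity gives X_(tau_n) -> X_tau, and |X_t| <= Y lets dominated
   convergence carry the bound over to X_tau.  If W is a version of
   E(X_tau | F_tau), the bound on B = {W > A} /\ {tau <= N} forces P(B) = 0.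
   The fixed-time bounds follow from the hypothesis because versions of
   E(X_t | F_t) exist (Radon-Nikodym). *)

Lemma sigma_algebra_setD (T : pointedType) (G : set (set T)) (A B : set T) :
  sigma_algebra setT G -> G A -> G B -> G (A `\` B).
Proof.
by move=> sG; rewrite -(measurable_g_measurableTypeE sG); exact: measurableD.
Qed.

Section sub_sigma_algebra.
Context d (T : measurableType d) (G : set (set T)).
Hypothesis GP : G `<=` measurable.

Lemma g_sigma_sub_measurable : <<s G >> `<=` measurable.
Proof. by apply: smallest_sub => //; exact: sigma_algebra_measurable. Qed.

Lemma measurable_fun_id_g_sigma :
  measurable_fun [set: T] (id : T -> g_sigma_algebraType G).
Proof. by move=> _ B mB; rewrite setTI; exact: g_sigma_sub_measurable. Qed.

End sub_sigma_algebra.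

(* The proof arguments are carried in the term so that the charge instance
   below can be inferred. *)
Definition sub_sigma_integral d (T : measurableType d) (R : realType)
    (P : probability T R) (G : set (set T)) (Z : T -> R)
    of G `<=` measurable & P.-integrable setT (fun w => (Z w)%:E) :
    set (g_sigma_algebraType G) -> \bar R :=
  fun A => (\int[P]_(w in A) (Z w)%:E)%E.

Section sub_sigma_integral_charge.
Context d (T : measurableType d) (R : realType) (P : probability T R).
Variables (G : set (set T)) (Z : T -> R).
Hypothesis GP : G `<=` measurable.
Hypothesis iZ : P.-integrable setT (fun w => (Z w)%:E).
Local Notation nu := (sub_sigma_integral GP iZ).

Let nu0 : nu set0 = 0%E. Proof. exact: integral_set0. Qed.

Let nu_fin_num A : measurable A -> nu A \is a fin_num.
Proof.
move=> /(g_sigma_sub_measurable GP) mA.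
exact/integrable_fin_num/(integrableS measurableT _ _ iZ).
Qed.

Let nu_sigma_additive : semi_sigma_additive nu.
Proof.
move=> F mF tF mUF; have sub := g_sigma_sub_measurable GP.
exact: (@charge_semi_sigma_additive _ _ _ (induced_charge iZ) F
  (fun n => sub _ (mF n)) tF (sub _ mUF)).
Qed.

HB.instance Definition _ :=
  isCharge.Build _ _ _ nu nu0 nu_fin_num nu_sigma_additive.

End sub_sigma_integral_charge.

Section integral_cst_bounds.
Context d (T : measurableType d) (R : realType).
Variable mu : {finite_measure set T -> \bar R}.
Variables (D : set T) (f : T -> R) (a : R).
Hypothesis mD : measurable D.
Hypothesis intf : mu.-integrable D (EFin \o f).
Local Open Scope ereal_scope.

Let mf : measurable_fun D (fun x => (f x - a)%R%:E).
Proof.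
apply/measurable_EFinP/measurable_funB => //.
exact/measurable_EFinP/(measurable_int _ intf).
Qed.

Lemma integralB_cst :
  \int[mu]_(x in D) (f x - a)%R%:E = \int[mu]_(x in D) (f x)%:E - a%:E * mu D.
Proof.
rewrite (integralB_EFin mD intf (finite_measure_integrable_cst _ a mD)).
by rewrite -integral_cst.
Qed.

Lemma ae_le_cst_integral :
  {ae mu, forall x, (f x <= a)%R} -> \int[mu]_(x in D) (f x)%:E <= a%:E * mu D.
Proof.
move=> fa; rewrite -sube_le0 ?fin_numM ?fin_num_measure// -integralB_cst.
rewrite (ae_eq_integral (fun x => - `|(f x - a)%R%:E|))//.
- by rewrite integral_ge0N// oppe_le0; exact: integral_ge0.
- exact/measurableT_comp/measurableT_comp.
- apply: filterS fa => x fxa _.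
  by rewrite lee0_abs ?oppeK// lee_fin subr_le0.
Qed.

Lemma gt_cst_integral_measure0 : (forall x, D x -> (a < f x)%R) ->
  \int[mu]_(x in D) (f x)%:E <= a%:E * mu D -> mu D = 0.
Proof.
move=> af; rewrite -sube_le0 ?fin_numM ?fin_num_measure// -integralB_cst => le0.
have : \int[mu]_(x in D) `|(f x - a)%R%:E| = 0.
  apply/eqP; rewrite eq_le integral_ge0// andbT.
  rewrite (eq_integral (fun x => (f x - a)%R%:E))// => x /set_mem Dx.
  by rewrite gee0_abs// lee_fin subr_ge0 ltW// af.
move/(ae_eq_integral_abs _ mD mf) => [N [mN N0 sub]].
apply: (subset_measure0 mD mN) N0 => x Dx; apply: sub => /(_ Dx) /eqP.
by rewrite /cst eqe subr_eq0 gt_eqF// af.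
Qed.

End integral_cst_bounds.

Section conditional_expectation.
Context d (T : measurableType d) (R : realType) (P : probability T R).
Variables (G : set (set T)) (Z : T -> R).
Hypothesis sG : sigma_algebra setT G.
Hypothesis GP : G `<=` measurable.
Hypothesis iZ : P.-integrable setT (fun w => (Z w)%:E).
Local Open Scope ereal_scope.

Lemma cond_exp_version_exists : exists W, cond_exp_version P G Z W.
Proof.
have mid := measurable_fun_id_g_sigma GP.
pose iG : {mfun T >-> g_sigma_algebraType G} := mfun_Sub (mem_set mid).
pose mu := distribution P iG.
have numu : sub_sigma_integral GP iZ `<< mu.
  apply/null_content_dominatesP => A mA muA.
  have mA' := g_sigma_sub_measurable GP mA.
  by apply: null_set_integral => //;
    exact: measurable_funS measurableT (@subsetT _ _) (measurable_int _ iZ).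
have f_fin := Radon_Nikodym_fin_num _ numu.
have if_mu := Radon_Nikodym_integrable numu.
have f_int := Radon_Nikodym_integral numu.
set f := Radon_Nikodym _ _ in f_fin if_mu f_int.
have fE : (fun x => (fine (f x))%:E) = f by apply/funext => x; rewrite fineK.
have mf := measurable_int _ if_mu.
have mfP : measurable_fun [set: T] (f \o iG) by exact: measurableT_comp mf mid.
have if_P : P.-integrable [set: T] (f \o iG).
  apply/integrableP; split => //.
  have := (integrableP _ _ _ if_mu).2.
  by rewrite ge0_integral_pushforward//; exact: measurableT_comp.
have GE := measurable_g_measurableTypeE sG.
exists (fun x => fine (f x)); split; [|split].
- move=> B mB; rewrite -GE -[_ @^-1` _]setTI.
  by apply: (measurable_EFinP _ _).1 => //; rewrite /comp fE.
- by rewrite fE.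
- move=> A GA; rewrite fE.
  have mA : (G.-sigma).-measurable (A : set (g_sigma_algebraType G)).
    by rewrite GE.
  transitivity (sub_sigma_integral GP iZ A); last by [].
  rewrite (f_int _ mA) integral_pushforward//.
  exact: integrableS measurableT (GP GA) (@subsetT _ _) if_P.
Qed.

Lemma cond_exp_le_integral (A : R) : cond_exp_le P G Z A ->
  forall B, G B -> \int[P]_(w in B) (Z w)%:E <= A%:E * P B.
Proof.
move=> ZA B GB; have [W hW] := cond_exp_version_exists.
have [_ [iW eW]] := hW.
rewrite -eW//; apply: ae_le_cst_integral (GP GB) _ (ZA W hW).
exact: integrableS measurableT (GP GB) (@subsetT _ _) iW.
Qed.

Lemma cond_exp_le_exhaustion (A : R) (E : (set T)^nat) :
  \bigcup_N E N = setT -> (forall B N, G B -> G (B `&` E N)) ->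
  (forall B N, G B ->
     \int[P]_(w in B `&` E N) (Z w)%:E <= A%:E * P (B `&` E N)) ->
  cond_exp_le P G Z A.
Proof.
move=> covE GE ZA W [mW [iW eW]]; set H := [set w | (A < W w)%R].
have GH : G H.
  have := mW _ (measurable_itv `]A, +oo[).
  rewrite (_ : W @^-1` _ = H)//.
  by apply/seteqP; split => w; rewrite /= in_itv/= andbT.
have H0 N : P (H `&` E N) = 0.
  have mHN := GP (GE _ N GH).
  apply: (gt_cst_integral_measure0 (f := W) (a := A) mHN).
  - exact: integrableS measurableT mHN (@subsetT _ _) iW.
  - by move=> w [].
  - by rewrite eW; [exact: ZA|exact: GE].
change (P.-negligible (~` [set w | (W w <= A)%R])).
apply: (@negligibleS _ _ _ _ (\bigcup_N (H `&` E N))).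
  move=> w /negP; rewrite -ltNge => Aw.
  have [N _ ENw] : (\bigcup_N E N) w by rewrite covE.
  by exists N.
apply: negligible_bigcup => N.
by exists (H `&` E N); split => //; [exact: GP (GE _ N GH)|exact: H0].
Qed.

End conditional_expectation.

Section upper_grid.
Variable R : realType.
Implicit Types (n k : nat) (r : R).

Definition grid_index n r : nat := `|Num.ceil (r * n.+1%:R)|%N.

Definition upper_grid n r : R := (grid_index n r)%:R / n.+1%:R.

Let ceil_grid_ge0 n r : 0 <= r -> (0 <= Num.ceil (r * n.+1%:R))%R.
Proof. by move=> r0; rewrite ceil_ge0 (lt_le_trans (ltrN10 _))// mulr_ge0. Qed.

Lemma grid_indexE n r : 0 <= r ->
  (grid_index n r)%:R = (Num.ceil (r * n.+1%:R))%:~R :> R.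
Proof. by move=> r0; rewrite natr_absz ger0_norm// ceil_grid_ge0. Qed.

Lemma grid_index_le n r k : 0 <= r ->
  (grid_index n r <= k)%N = (r <= k%:R / n.+1%:R).
Proof.
move=> r0; rewrite ler_pdivlMr// -[k%:R]/(k%:Z)%:~R -ceil_le_int -lez_nat.
by rewrite /grid_index gez0_abs// ceil_grid_ge0.
Qed.

Lemma upper_grid_ge n r : 0 <= r -> r <= upper_grid n r.
Proof. by move=> r0; rewrite ler_pdivlMr// grid_indexE// ceil_ge. Qed.

Lemma upper_grid_lt n r : 0 <= r -> upper_grid n r < r + n.+1%:R^-1.
Proof.
move=> r0; rewrite /upper_grid ltr_pdivrMr// mulrDl mulVf// grid_indexE//.
by rewrite -ltrBlDr; have := ceilB1_lt (r * n.+1%:R); rewrite intrB.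
Qed.

Lemma cvg_upper_grid_right (f : R -> R) r : 0 <= r ->
  f @ r^'+ --> f r -> (fun n => f (upper_grid n r)) @ \oo --> f r.
Proof.
move=> r0 fr; apply/cvgrPdist_lt => e e0.
have /cvgrPdist_lt/(_ e e0)/nbhs_ballP[delta /= delta0 fr_ball] := fr.
near=> n.
have hn : n.+1%:R^-1 < delta.
  by near: n; exact: (near_infty_natSinv_lt (PosNum delta0)).
have := upper_grid_ge n r0; rewrite le_eqVlt => /orP[/eqP <-|r_lt].
  by rewrite subrr normr0.
apply: fr_ball => //.
rewrite /ball /= distrC ger0_norm ?subr_ge0 ?upper_grid_ge//.
by rewrite ltrBlDl (lt_trans (upper_grid_lt n r0))// ltrD2l.
Unshelve. all: by end_near.
Qed.

End upper_grid.

Lemma measurable_fun_switch d (T : measurableType d) (R : realType)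
    (k : T -> nat) (f : nat -> T -> R) :
  (forall i, measurable [set w | (k w <= i)%N]) ->
  (forall i, measurable_fun setT (f i)) ->
  measurable_fun setT (fun w => f (k w) w).
Proof.
move=> mk mf.
have mk_eq i : measurable [set w | k w = i].
  rewrite (_ : [set w | k w = i] =
      [set w | (k w <= i)%N] `\` [set w | (k w < i)%N]); last first.
    by apply/seteqP; split => w /=; [move=> ->; rewrite ltnn|
      case=> ki /negP; rewrite -leqNgt => ik; apply/eqP; rewrite eqn_leq ki].
  apply: measurableD => //; case: i => [|i]; last exact: mk.
  by rewrite (_ : [set w | _] = set0)//; apply/seteqP; split => w.
rewrite (_ : setT = \bigcup_i [set w | k w = i]); last first.
  by apply/seteqP; split => w // _; exists (k w).
apply/measurable_fun_bigcup => // i.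
apply: (eq_measurable_fun (f i)); first by move=> w; rewrite inE /= => ->.
exact: measurable_funTS.
Qed.

Section stopped_process.
Context d (T : measurableType d) (R : realType) (P : probability T R).
Variables (F : R -> set (set T)) (X : R -> T -> R) (Y : T -> R) (A : R).
Variable tau : T -> R.
Hypothesis filtrationF : is_filtration F.
Hypothesis mX : forall t, 0 <= t -> measurable_fun setT (X t).
Hypothesis X_right_cont :
  forall w t, 0 <= t -> (fun s => X s w) @ t^'+ --> X t w.
Hypothesis iY : P.-integrable setT (fun w => (Y w)%:E).
Hypothesis X_le_Y : forall t, 0 <= t -> {ae P, forall w, `|X t w| <= Y w}.
Hypothesis X_cond_exp_le : forall t, 0 <= t -> cond_exp_le P (F t) (X t) A.
Hypothesis stopping_tau : is_stopping_time F tau.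

Let F_sigma t : 0 <= t -> sigma_algebra setT (F t).
Proof. by case: filtrationF => + _; apply. Qed.

Let F_measurable t : 0 <= t -> F t `<=` measurable.
Proof. by case: filtrationF => _ [+ _]; apply. Qed.

Let F_nondecreasing s t : 0 <= s -> s <= t -> F s `<=` F t.
Proof. by case: filtrationF => _ [_]; apply. Qed.

Let tau_ge0 w : 0 <= tau w. Proof. by case: stopping_tau. Qed.

Let F_tau_le t : 0 <= t -> F t [set w | tau w <= t].
Proof. by case: stopping_tau => _; apply. Qed.

Let grid_ge0 n k : 0 <= k%:R / n.+1%:R :> R.
Proof. by rewrite divr_ge0. Qed.

Lemma measurable_tau_le t : measurable [set w | tau w <= t].
Proof.
have [t0|t0] := leP 0 t; first exact/F_measurable/F_tau_le.
rewrite (_ : [set w | _] = set0)// -subset0 => w /= tw.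
by have := le_lt_trans (tau_ge0 w) (le_lt_trans tw t0); rewrite ltxx.
Qed.

Lemma integrable_X t : 0 <= t -> P.-integrable setT (fun w => (X t w)%:E).
Proof.
move=> t0; apply/integrableP; split; first exact/measurable_EFinP/mX.
apply: le_lt_trans (integrableP _ _ _ (integrable_abse iY)).2.
apply: ae_ge0_le_integral => //.
- exact/measurableT_comp/measurable_EFinP/mX.
- by do 2 apply/measurableT_comp => //; exact: measurable_int iY.
- apply: filterS (X_le_Y t0) => w XY _.
  by rewrite /= lee_fin normr_id (le_trans XY)// ler_norm.
Qed.

Lemma grid_index_tau_le n k :
  [set w | (grid_index n (tau w) <= k)%N] = [set w | tau w <= k%:R / n.+1%:R].
Proof. by apply/seteqP; split => w /=; rewrite grid_index_le. Qed.

Lemma measurable_stopped_grid n :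
  measurable_fun setT (fun w => X (upper_grid n (tau w)) w).
Proof.
apply: (measurable_fun_switch (f := fun k => X (k%:R / n.+1%:R))) => k.
- by rewrite grid_index_tau_le; exact: measurable_tau_le.
- exact: mX.
Qed.

Lemma cvg_stopped_grid w :
  (fun n => X (upper_grid n (tau w)) w) @ \oo --> stopped_process X tau w.
Proof. exact: cvg_upper_grid_right (tau_ge0 w) (X_right_cont (tau_ge0 w)). Qed.

Lemma measurable_stopped_process : measurable_fun setT (stopped_process X tau).
Proof.
apply: measurable_fun_cvg measurable_stopped_grid _ => w _.
exact: cvg_stopped_grid.
Qed.

Lemma stopped_grid_le_Y :
  {ae P, forall w n, `|X (upper_grid n (tau w)) w| <= Y w}.
Proof.
apply: ae_foralln => n.
have : {ae P, forall w k, `|X (k%:R / n.+1%:R) w| <= Y w}.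
  by apply: ae_foralln => k; exact: X_le_Y.
by apply: filterS => w XY; exact: XY.
Qed.

Lemma stopped_sigma_grid B n k : stopped_sigma F tau B ->
  F (k%:R / n.+1%:R) (B `&` [set w | (grid_index n (tau w) <= k)%N]).
Proof. by case=> _ FB; rewrite grid_index_tau_le; exact: FB. Qed.

Lemma bigcup_tau_le : \bigcup_N [set w | tau w <= N%:R] = setT.
Proof.
apply/seteqP; split => // w _; exists (Num.bound (tau w)) => //=.
exact/ltW/archi_boundP.
Qed.

Local Open Scope ereal_scope.

Let X_integral_le t B : (0 <= t)%R -> F t B ->
  \int[P]_(w in B) (X t w)%:E <= A%:E * P B.
Proof.
move=> t0; exact: (cond_exp_le_integral (F_sigma t0) (F_measurable t0)
  (integrable_X t0) (X_cond_exp_le t0)).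
Qed.

Lemma stopped_grid_integral_le B n m : stopped_sigma F tau B ->
  \int[P]_(w in B `&` [set w | (grid_index n (tau w) <= m)%N])
     (X (upper_grid n (tau w)) w)%:E <=
  A%:E * P (B `&` [set w | (grid_index n (tau w) <= m)%N]).
Proof.
move=> FB; have mB : measurable B by case: FB.
have mS k : measurable (B `&` [set w | (grid_index n (tau w) <= k)%N]).
  apply: measurableI => //.
  by rewrite grid_index_tau_le; exact: measurable_tau_le.
elim: m => [|m IH].
  rewrite (eq_integral (fun w => (X (0%:R / n.+1%:R) w)%:E)).
    exact: X_integral_le (stopped_sigma_grid n 0 FB).
  by move=> w /set_mem[_ /=]; rewrite leqn0 /upper_grid => /eqP ->.
set S := B `&` _ in IH *; set S1 := B `&` _.
have S1E : S1 = S `|` (S1 `\` S).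
  by rewrite setDUK// => w [Bw /= ?]; split => //; exact: leqW.
have FS1S : F (m.+1%:R / n.+1%:R) (S1 `\` S).
  apply: sigma_algebra_setD; first exact: F_sigma.
    exact: stopped_sigma_grid.
  apply: (F_nondecreasing (grid_ge0 _ _)); last exact: stopped_sigma_grid.
  by rewrite ler_pM2r ?invr_gt0// ler_nat.
have XS1S : \int[P]_(w in S1 `\` S) (X (upper_grid n (tau w)) w)%:E =
            \int[P]_(w in S1 `\` S) (X (m.+1%:R / n.+1%:R) w)%:E.
  apply: eq_integral => w /set_mem[[Bw /= le] /= nle].
  rewrite /upper_grid; suff -> : grid_index n (tau w) = m.+1 by [].
  by apply/eqP; rewrite eqn_leq le ltnNge; apply/negP => ?; apply: nle.
have mS0 : measurable S := mS m.
have mD : measurable (S1 `\` S) by apply: measurableD; exact: mS.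
have disj : S `&` (S1 `\` S) = set0 by rewrite setDIK.
rewrite S1E integral_setU_EFin//; last 2 first.
- exact/measurable_funTS/measurable_stopped_grid.
- exact/disj_set2P.
by rewrite measureU// ge0_muleDr// leeD// XS1S; exact: X_integral_le.
Qed.

Lemma stopped_integral_le_bounded B (N : nat) : stopped_sigma F tau B ->
  B `<=` [set w | (tau w <= N%:R)%R] ->
  \int[P]_(w in B) (stopped_process X tau w)%:E <= A%:E * P B.
Proof.
move=> FB BN; have mB : measurable B by case: FB.
have grid_le n :
    \int[P]_(w in B) (X (upper_grid n (tau w)) w)%:E <= A%:E * P B.
  have := stopped_grid_integral_le n (N * n.+1) FB.
  rewrite (_ : B `&` _ = B)//; apply/setIidl => w /BN /=.
  by rewrite grid_index_le// natrM mulfK.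
have mgrid n : measurable_fun B (fun w => (X (upper_grid n (tau w)) w)%:E).
  exact/measurable_EFinP/measurable_funTS/measurable_stopped_grid.
have mXtau : measurable_fun B (fun w => (stopped_process X tau w)%:E).
  exact/measurable_EFinP/measurable_funTS/measurable_stopped_process.
have grid_cvg : {ae P, forall w, B w ->
    (fun n => (X (upper_grid n (tau w)) w)%:E) @ \oo -->
    (stopped_process X tau w)%:E}.
  by apply: aeW => w _; apply: cvg_EFin; [exact: nearW|exact: cvg_stopped_grid].
have iYB : P.-integrable B (fun w => (Y w)%:E).
  exact: integrableS measurableT mB (@subsetT _ _) iY.
have grid_le_Y : {ae P, forall w n, B w ->
    `|(X (upper_grid n (tau w)) w)%:E| <= (Y w)%:E}.
  by apply: filterS stopped_grid_le_Y => w XY n _; rewrite lee_fin.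
have [_ _ cvg_int] :=
  dominated_convergence mB mgrid mXtau grid_cvg iYB grid_le_Y.
rewrite -(cvg_lim _ cvg_int)//; apply: lime_le; first exact: cvgP cvg_int.
exact: nearW.
Qed.

Lemma stopped_sigmaI_tau_le B (N : nat) : stopped_sigma F tau B ->
  stopped_sigma F tau (B `&` [set w | (tau w <= N%:R)%R]).
Proof.
case=> mB FB; split; first exact: measurableI mB (measurable_tau_le _).
move=> t t0; have Nt0 : (0 <= Num.min N%:R t)%R by rewrite le_min ler0n t0.
rewrite -setIA [X in B `&` X](_ : _ = [set w | (tau w <= Num.min N%:R t)%R]).
  by apply: (F_nondecreasing Nt0); [rewrite ge_min lexx orbT|exact: FB].
by apply/seteqP; split => w /=; rewrite le_min; [case=> -> ->|case/andP].
Qed.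

End stopped_process.

Unset Implicit Arguments.

Theorem lemma4p4 (d : measure_display) (T : measurableType d) (R : realType)
  (P : probability T R) (F : R -> set (set T)) (X : R -> T -> R)
  (Y : T -> R) (A : R) (tau : T -> R) :
  is_filtration F ->
  (forall t, 0 <= t -> measurable_fun setT (X t)) ->
  (forall w t, 0 <= t -> (fun s => X s w) @ t^'+ --> X t w) ->
  P.-integrable setT (fun w => (Y w)%:E) ->
  0 < A ->
  (forall t, 0 <= t -> {ae P, forall w, `|X t w| <= Y w}) ->
  (forall t, 0 <= t -> cond_exp_le P (F t) (X t) A) ->
  is_stopping_time F tau ->
  cond_exp_le P (stopped_sigma F tau) (stopped_process X tau) A.
Proof.
move=> hF mX X_rc iY _ X_le_Y X_ce htau.
have FtauI := stopped_sigmaI_tau_le hF htau.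
apply: (cond_exp_le_exhaustion _ (bigcup_tau_le htau)).
- by move=> B [].
- by move=> B N; exact: FtauI.
- move=> B N FB.
  apply: (stopped_integral_le_bounded hF mX X_rc iY X_le_Y X_ce htau).
    exact: FtauI.
  exact: subIsetr.
Qed.
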